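(* Let $R$ be a commutative ring endowed with a translation-invariant partial order $\le$ on its additive group, and assume that $R$ is archimedean and localizable. Then $n\cdot 1\in\mathrm{Loc}(R)$ for every $n\in\mathbb{N}$.
   Context: Rings are commutative with unit $1$; $\mathbb{N}=\{1,2,\dots\}$. Translation-invariant means $r\le s$ implies $r+t\le s+t$; $R^+=\{r:0\le r\}$. $R$ is archimedean if whenever $g,h\in R$ satisfy $kg+h\in R^+$ for all $k\in\mathbb{N}$, then $g\in R^+$. $\mathrm{Loc}(R)$ is the set of $s\in 1+R^+$ such that for all $r\in R$, $rs\in R^+$ implies $r\in R^+$. $R$ is localizable if for every $r\in R$ there exists $s\in\mathrm{Loc}(R)$ with $-s\le r\le s$. *)

From HB Require Import structures.
From mathcomp Require Import all_boot all_order all_algebra.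
Set Implicit Arguments. Unset Strict Implicit. Unset Printing Implicit Defensive.
Import GRing.Theory.
Local Open Scope ring_scope.

Definition partial_order (R : Type) (le : R -> R -> Prop) : Prop :=
  (forall r, le r r) /\
  (forall r s, le r s -> le s r -> r = s) /\
  (forall r s t, le r s -> le s t -> le r t).

Definition translation_invariant (R : comPzRingType) (le : R -> R -> Prop) : Prop :=
  forall r s t : R, le r s -> le (r + t) (s + t).

Definition Rplus (R : comPzRingType) (le : R -> R -> Prop) (r : R) : Prop := le 0 r.

Definition archimedean (R : comPzRingType) (le : R -> R -> Prop) : Prop :=
  forall g h : R, (forall k : nat, (0 < k)%N -> Rplus le (g *+ k + h)) -> Rplus le g.

Definition Loc (R : comPzRingType) (le : R -> R -> Prop) (s : R) : Prop :=
  (exists p : R, Rplus le p /\ s = 1 + p) /\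
  (forall r : R, Rplus le (r * s) -> Rplus le r).

Definition localizable (R : comPzRingType) (le : R -> R -> Prop) : Prop :=
  forall r : R, exists s : R, Loc le s /\ le (- s) r /\ le r s.

From HB Require Import structures.
From mathcomp Require Import all_boot all_order all_algebra.
Set Implicit Arguments. Unset Strict Implicit.
Local Open Scope ring_scope.
Import GRing.Theory.

(* Testing [Loc] at [r = 1] against an [s] in [Loc] with [0 <= s] gives
   [0 <= 1], so [n%:R = 1 + (n - 1)%:R] lies in [1 + R^+].  If [r * n >= 0],
   pick [s] in [Loc] with [-s <= r]; writing [k = q n + j] with [j < n],
   [k r + (n - 1) s = q (n r) + j (r + s) + (n - 1 - j) s >= 0] for every
   [k], so [r >= 0] by the archimedean property. *)

Section PositiveCone.

Variables (R : comPzRingType) (le : R -> R -> Prop).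
Hypotheses (Hpo : partial_order le) (Hti : translation_invariant le).

Lemma Rplus_add (a b : R) : Rplus le a -> Rplus le b -> Rplus le (a + b).
Proof.
case: Hpo => _ [_ le_trans] Ha Hb; apply: (le_trans _ b) => //.
by have := Hti b Ha; rewrite add0r.
Qed.

Lemma Rplus_muln (a : R) m : Rplus le a -> Rplus le (a *+ m).
Proof.
move=> Ha; elim: m => [|m IHm]; first by rewrite /Rplus mulr0n; case: Hpo.
by rewrite mulrS; apply: Rplus_add.
Qed.

Lemma le_oppr_Rplus_add (r s : R) : le (- s) r -> Rplus le (r + s).
Proof. by move=> Hsr; have := Hti s Hsr; rewrite addNr. Qed.

Lemma Rplus1_Loc (s : R) : Loc le s -> Rplus le s -> Rplus le 1.
Proof. by case=> _ HsLoc Hs; apply: HsLoc; rewrite /Rplus mul1r. Qed.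

Lemma Rplus_Loc (s : R) : Rplus le 1 -> Loc le s -> Rplus le s.
Proof. by move=> H1 [[p [Hp ->]] _]; apply: Rplus_add. Qed.

Lemma natr_1_add_Rplus n : (0 < n)%N -> Rplus le 1 ->
  exists p : R, Rplus le p /\ (n%:R : R) = 1 + p.
Proof.
move=> n_gt0 H1; exists n.-1%:R; split; first exact: Rplus_muln.
by rewrite -{1}(prednK n_gt0) -natr1 addrC.
Qed.

Section BoundedBelow.

Variables (r s : R) (n : nat).
Hypotheses (n_gt0 : (0 < n)%N) (Hs : Rplus le s) (Hrs : Rplus le (r + s))
  (Hnr : Rplus le (r *+ n)).

Lemma Rplus_muln_add_muln k : Rplus le (r *+ k + s *+ n.-1).
Proof.
have j_le : (k %% n <= n.-1)%N by rewrite -ltnS prednK // ltn_mod.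
rewrite (divn_eq k n) mulrnDr mulrnA -(subnKC j_le) mulrnDr.
rewrite mulrnAC -addrA [r *+ (k %% n) + _]addrA -mulrnDl addrA.
by do 2?[apply: Rplus_add]; apply: Rplus_muln.
Qed.

Lemma archimedean_Rplus_muln : archimedean le -> Rplus le r.
Proof.
by move=> Harch; apply: (Harch r (s *+ n.-1)) => k _; apply: Rplus_muln_add_muln.
Qed.

End BoundedBelow.

End PositiveCone.

Theorem lemma3 (R : comPzRingType) (le : R -> R -> Prop)
  (Hpo : partial_order le) (Hti : translation_invariant le)
  (Harch : archimedean le) (Hloc : localizable le) :
  forall n : nat, (0 < n)%N -> Loc le (n%:R : R).
Proof.
have H1 : Rplus le (1 : R).
  have [s [HsLoc [_ H0s]]] := Hloc 0.
  exact: Rplus1_Loc HsLoc H0s.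
move=> n n_gt0; split; first exact: natr_1_add_Rplus.
move=> r; rewrite mulr_natr => Hnr.
have [s [HsLoc [Hsr _]]] := Hloc r.
apply: (archimedean_Rplus_muln Hpo Hti n_gt0 _ _ Hnr Harch).
- exact: Rplus_Loc HsLoc.
- exact: le_oppr_Rplus_add.
Qed.
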